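(* Let $0<l<m<n$ be pairwise coprime square-free integers and let $K=\mathbb{Q}(\sqrt{ml},\sqrt{nl})$. Then \[ \tfrac{1}{48}\, n \le M(\mathcal{O}_K). \]
   Context: For a nonconstant polynomial $f(x)=c\prod_{i=1}^d (x-\alpha_i)\in\mathbb{C}[x]$, the Mahler measure is $M(f)=|c|\prod_{|\alpha_i|\ge 1}|\alpha_i|$. For an algebraic number $\alpha$, $M(\alpha)$ is the Mahler measure of its minimal polynomial over $\mathbb{Z}$ (with content $1$). For a number field $K$ with ring of integers $\mathcal{O}_K$, $M(\mathcal{O}_K)=\min\{M(\alpha):\alpha\in\mathcal{O}_K,\ \mathbb{Q}(\alpha)=K\}$. *)

From mathcomp Require Import all_boot all_order all_algebra all_field.
Set Implicit Arguments. Unset Strict Implicit. Unset Printing Implicit Defensive.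
Import Order.TTheory GRing.Theory Num.Theory.
Local Open Scope ring_scope.

Definition squarefree (n : nat) : Prop :=
  forall p : nat, prime p -> ~~ (p * p %| n)%N.

(* Mahler measure of a polynomial over algC:
   M(f) = |c| * prod_{roots a} max(1, |a|)  (roots with multiplicity) *)
Definition mahler (f : {poly algC}) : algC :=
  `|lead_coef f| *
  \prod_(z <- sval (closed_field_poly_normal f)) Num.max 1 `|z|.

(* p is the minimal polynomial of x over Z with content 1:
   an integer polynomial with content 1 (and positive leading coefficient,
   as zcontents carries the sign of the leading coefficient) which is a
   nonzero multiple of the monic minimal polynomial of x over Q. *)
Definition minpolyZ (x : algC) (p : {poly int}) : Prop :=
  zcontents p = 1 /\
  exists c : algC, c != 0 /\ map_poly intr p = c *: minCpoly x.

Definition mahler_alg (x : algC) (m : algC) : Prop :=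
  exists p : {poly int}, minpolyZ x p /\ m = mahler (map_poly intr p).

Definition in_biquad (a b : nat) (x : algC) : Prop :=
  exists u v w t : rat,
    x = ratr u + ratr v * sqrtC a%:R + ratr w * sqrtC b%:R
        + ratr t * (sqrtC a%:R * sqrtC b%:R).

(* Q(x) = Q[x] for algebraic x: rational polynomial expressions in x *)
Definition in_Qadj (x y : algC) : Prop :=
  exists p : {poly rat}, y = (map_poly ratr p).[x].

Definition generates_biquad (a b : nat) (x : algC) : Prop :=
  in_biquad a b x /\ in_Qadj x (sqrtC a%:R) /\ in_Qadj x (sqrtC b%:R).

From mathcomp Require Import all_boot all_order all_algebra all_field.
From mathcomp Require Import ring zify.
Import Order.TTheory GRing.Theory Num.Theory.
Local Open Scope ring_scope.

Set Implicit Arguments.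
Unset Strict Implicit.
Unset Printing Implicit Defensive.

(* Write x = u + v sqrt(ml) + w sqrt(nl) + t sqrt(ml) sqrt(nl) with u, v, w, t
   rational.  Changing the signs of the two square roots yields four conjugates
   x_{++}, x_{+-}, x_{-+}, x_{--} of x: they are roots of the minimal polynomial
   of x, hence algebraic integers, and they are pairwise distinct because both
   square roots are polynomials in x.  The sum and the difference of
   x_{++} - x_{+-} and x_{-+} - x_{--} are 4w sqrt(nl) and 4tl sqrt(mn),
   algebraic integers with rational squares, so square-freeness makes 4w and
   4tl integers.  Therefore 4 (x_{++} - x_{+-}) (x_{-+} - x_{--}) equals
   n (l (4w)^2 - m (4tl)^2), a nonzero integer multiple of n, whereas
   |a - b| <= 2 max(1,|a|) max(1,|b|) bounds it by 16 M(x).  Hence even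
   n / 16 <= M(x). *)

Lemma squarefree_mul (a b : nat) :
  coprime a b -> squarefree a -> squarefree b -> squarefree (a * b).
Proof.
move=> cab sqa sqb p p_pr; apply/negP => ppab.
have [pa | npa] := boolP (p %| a)%N.
- have cpb : coprime (p * p) b by rewrite coprimeMl andbb (coprime_dvdl pa cab).
  by move: ppab; rewrite Gauss_dvdl // => ppa; have := sqa _ p_pr; rewrite ppa.
- have cpa : coprime (p * p) a by rewrite coprimeMl andbb prime_coprime.
  by move: ppab; rewrite Gauss_dvdr // => ppb; have := sqb _ p_pr; rewrite ppb.
Qed.

Lemma squarefree_int_of_sqr (k : nat) (r : rat) :
  squarefree k -> r ^+ 2 * k%:R \is a Num.int -> r \is a Num.int.
Proof.
move=> sqk /intrP [z rkz].
have numE : (numq r ^+ 2 * k%:R = z * denq r ^+ 2 :> int).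
  apply: (@intr_inj rat); rewrite !rmorphM /= rmorph_nat numqE -rkz; ring.
have den2_dvd : (`|denq r| ^ 2 %| k)%N.
  have numE' : (`|numq r| ^ 2 * k = `|z| * `|denq r| ^ 2)%N.
    by have := congr1 absz numE; rewrite !abszM natz absz_nat !expnS !expn0 !muln1.
  rewrite -(@Gauss_dvdr _ (`|numq r| ^ 2)); last first.
    by rewrite coprimeXl // coprime_sym coprimeXl // coprime_num_den.
  by rewrite numE' dvdn_mull.
rewrite Qint_def; apply/eqP.
case: (ltngtP `|denq r| 1) => [|den_gt1|den1].
- by rewrite ltnS leqn0 absz_eq0 (negbTE (denq_neq0 r)).
- have := sqk _ (pdiv_prime den_gt1).
  by rewrite (dvdn_trans _ den2_dvd) // expnS expn1 dvdn_mul // pdiv_dvd.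
- by rewrite -(gez0_abs (ltW (denq_gt0 r))) den1.
Qed.

Definition rat_nonsquare (k : nat) : Prop := forall q : rat, q ^+ 2 != k%:R.

Lemma squarefree_rat_nonsquare (k : nat) :
  squarefree k -> (1 < k)%N -> rat_nonsquare k.
Proof.
move=> sqk k_gt1 q; apply/eqP => qk.
have /intrP [z qz] : q \is a Num.int.
  by apply: (squarefree_int_of_sqr sqk); rewrite qk -natrM rpred_nat.
have zk : (`|z| ^ 2 = k)%N.
  have zk : z ^+ 2 = k%:R :> int.
    by apply: (@intr_inj rat); rewrite rmorphXn rmorph_nat /= -qz qk.
  by have := congr1 absz zk; rewrite abszX natz absz_nat.
have z_gt1 : (1 < `|z|)%N by rewrite ltnNge; apply: contraTN k_gt1 => z_le1; nia.
have := sqk _ (pdiv_prime z_gt1).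
by rewrite -zk expnS expn1 dvdn_mul // pdiv_dvd.
Qed.

Lemma rat_nonsquare_mul_sqr (k c : nat) :
  (0 < c)%N -> rat_nonsquare k -> rat_nonsquare (k * (c * c)).
Proof.
move=> c_gt0 nsqk q; apply: contra (nsqk (q / c%:R)) => /eqP qkc.
have c_neq0 : c%:R != 0 :> rat by rewrite pnatr_eq0 -lt0n.
by rewrite expr_div_n qkc !natrM -expr2 mulfK // expf_neq0.
Qed.

Definition biquad (s r : algC) (a b c d : rat) : algC :=
  ratr a + ratr b * s + ratr c * r + ratr d * (s * r).

Lemma biquad0 (s r : algC) : biquad s r 0 0 0 0 = 0.
Proof. by rewrite /biquad !rmorph0 !mul0r !addr0. Qed.

Lemma biquadB (s r : algC) a b c d a' b' c' d' :
  biquad s r a b c d - biquad s r a' b' c' d' =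
  biquad s r (a - a') (b - b') (c - c') (d - d').
Proof. by rewrite /biquad !rmorphB /=; ring. Qed.

(* The coordinates of f(x) do not depend on the choice of the square roots [s]
   and [r]: this is how sign changes of the roots act as field automorphisms. *)
Lemma horner_biquad (A B : nat) (u v w t : rat) (f : {poly rat}) :
  exists a b c d : rat, forall s r : algC, s ^+ 2 = A%:R -> r ^+ 2 = B%:R ->
    (map_poly ratr f).[biquad s r u v w t] = biquad s r a b c d.
Proof.
elim/poly_ind: f => [|f k [a [b [c [d IHf]]]]].
  by exists 0, 0, 0, 0 => s r _ _; rewrite map_poly0 horner0 biquad0.
exists (a * u + b * v * A%:R + c * w * B%:R + d * t * A%:R * B%:R + k),
  (a * v + b * u + (c * t + d * w) * B%:R),
  (a * w + c * u + (b * t + d * v) * A%:R), (a * t + d * u + b * w + c * v).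
move=> s r s2 r2.
rewrite rmorphD rmorphM /= map_polyX map_polyC hornerMXaddC IHf //= /biquad.
rewrite !(rmorphD, rmorphM, rmorph_nat) /= -s2 -r2; ring.
Qed.

Lemma biquad_sqrts (s r : algC) : biquad s r 0 1 0 0 = s /\ biquad s r 0 0 1 0 = r.
Proof. by rewrite /biquad !(rmorph0, rmorph1) !mul0r !mul1r !add0r !addr0. Qed.

Lemma rat_nonsquare_sqrt_neqN (k : nat) (s : algC) :
  rat_nonsquare k -> s ^+ 2 = k%:R -> s != - s.
Proof.
move=> nsqk s2; rewrite eq_sym eqNr; apply: contra (nsqk 0) => /eqP s0.
by rewrite expr0n /= eq_sym pnatr_eq0 -(pnatr_eq0 algC) -s2 s0 expr0n.
Qed.

Section Biquadratic.

Variables (A B : nat) (sA sB : algC).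
Hypotheses (nsqA : rat_nonsquare A) (nsqB : rat_nonsquare B).
Hypothesis nsqAB : rat_nonsquare (A * B).
Hypotheses (sA2 : sA ^+ 2 = A%:R) (sB2 : sB ^+ 2 = B%:R).

Lemma sqrt_notin_rat (q : rat) : sA != ratr q.
Proof.
apply: contra (nsqA q) => /eqP sAq.
by rewrite -(inj_eq (fmorph_inj (@ratr algC))) rmorphXn rmorph_nat /= -sAq sA2.
Qed.

Lemma quadratic_coord_eq0 (a b : rat) : ratr a + ratr b * sA = 0 -> a = 0 /\ b = 0.
Proof.
move=> abE.
have b0 : b = 0.
  have [//|b_neq0] := eqVneq b 0.
  have rb_neq0 : ratr b != 0 :> algC by rewrite fmorph_eq0.
  case/negP: (sqrt_notin_rat (- a / b)); apply/eqP.
  rewrite fmorph_div rmorphN /= -[X in X / _]add0r -abE.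
  by rewrite addrC addKr mulrC mulKf.
split=> //; apply/eqP.
by move: abE; rewrite b0 rmorph0 mul0r addr0 => /eqP; rewrite fmorph_eq0.
Qed.

Lemma quadratic_norm_eq0 (c d : rat) : c ^+ 2 = d ^+ 2 * A%:R -> c = 0 /\ d = 0.
Proof.
move=> cdE; have [d0 | d_neq0] := eqVneq d 0.
  by move: cdE; rewrite d0 expr0n mul0r => /eqP; rewrite expf_eq0 => /andP [_ /eqP].
by move/negP: (nsqA (c / d)); rewrite expr_div_n cdE mulrC mulKf ?expf_neq0.
Qed.

Lemma sqrt_notin_quadratic (p q : rat) : sB != ratr p + ratr q * sA.
Proof.
apply/eqP => sBE.
have sqrE : ratr (p ^+ 2 + q ^+ 2 * A%:R - B%:R) + ratr (2 * p * q) * sA = 0 :> algC.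
  by rewrite !(rmorphD, rmorphN, rmorphM, rmorphXn, rmorph_nat) /= -sB2 sBE -sA2; ring.
have [/eqP sqr0 /eqP] := quadratic_coord_eq0 sqrE.
rewrite !mulf_eq0 pnatr_eq0 /= => /orP [/eqP p0 | /eqP q0].
- move/negP: (nsqAB (q * A%:R)); apply.
  move: sqr0; rewrite p0 expr0n add0r subr_eq0 natrM => /eqP <-; apply/eqP; ring.
- by move/negP: (nsqB p); apply; move: sqr0; rewrite q0 expr0n mul0r addr0 subr_eq0.
Qed.

Lemma biquad_eq0 (a b c d : rat) :
  biquad sA sB a b c d = 0 -> [/\ a = 0, b = 0, c = 0 & d = 0].
Proof.
move=> abcdE.
suff [c0 d0] : c = 0 /\ d = 0.
  move: abcdE; rewrite /biquad c0 d0 rmorph0 !mul0r !addr0.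
  by move/quadratic_coord_eq0 => [].
apply: quadratic_norm_eq0; apply/eqP; rewrite -subr_eq0; apply: contraT => N_neq0.
set N := _ - _ in N_neq0.
(* Multiplying (a + b sA) + sB (c + d sA) = 0 by c - d sA puts sB in Q(sA). *)
have rN_neq0 : ratr N != 0 :> algC by rewrite fmorph_eq0.
have sBN : sB * ratr N = ratr (b * d * A%:R - a * c) + ratr (a * d - b * c) * sA.
  have sBcd : sB * (ratr c + ratr d * sA) = - (ratr a + ratr b * sA).
    apply/eqP; rewrite -addr_eq0 -[X in _ == X]abcdE /biquad; apply/eqP; ring.
  transitivity (sB * (ratr c + ratr d * sA) * (ratr c - ratr d * sA)).
    by rewrite /N !(rmorphB, rmorphM, rmorphXn, rmorph_nat) /= -sA2; ring.
  by rewrite sBcd !(rmorphB, rmorphM, rmorph_nat) /= -sA2; ring.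
case/negP: (sqrt_notin_quadratic ((b * d * A%:R - a * c) / N) ((a * d - b * c) / N)).
by apply/eqP; rewrite !fmorph_div [_ / _ * sA]mulrAC -mulrDl -sBN mulfK.
Qed.

Lemma biquad_inj (a b c d a' b' c' d' : rat) :
  biquad sA sB a b c d = biquad sA sB a' b' c' d' ->
  [/\ a = a', b = b', c = c' & d = d'].
Proof.
move=> /eqP; rewrite -subr_eq0 biquadB => /eqP /biquad_eq0.
by case=> /subr0_eq-> /subr0_eq-> /subr0_eq-> /subr0_eq->.
Qed.

Lemma horner_biquad_conj (u v w t : rat) (f : {poly rat}) (a b c d : rat) (s r : algC) :
  (map_poly ratr f).[biquad sA sB u v w t] = biquad sA sB a b c d ->
  s ^+ 2 = A%:R -> r ^+ 2 = B%:R ->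
  (map_poly ratr f).[biquad s r u v w t] = biquad s r a b c d.
Proof.
move=> fx s2 r2; have [a' [b' [c' [d' fE]]]] := horner_biquad A B u v w t f.
by move: fx; rewrite !fE // => /biquad_inj [-> -> -> ->].
Qed.

Section Conjugates.

Variables (u v w t : rat) (x : algC) (g h : {poly rat}).
Hypothesis xE : x = biquad sA sB u v w t.
Hypotheses (gx : sA = (map_poly ratr g).[x]) (hx : sB = (map_poly ratr h).[x]).

Lemma root_minCpoly_biquad (s r : algC) :
  s ^+ 2 = A%:R -> r ^+ 2 = B%:R -> root (minCpoly x) (biquad s r u v w t).
Proof.
move=> s2 r2; have [p [pE _] _] := minCpolyP x.
rewrite pE /root (@horner_biquad_conj _ _ _ _ _ 0 0 0 0) ?biquad0 //.
by rewrite -xE -pE; apply/eqP/root_minCpoly.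
Qed.

Lemma horner_biquad_sqrts (s r : algC) : s ^+ 2 = A%:R -> r ^+ 2 = B%:R ->
  (map_poly ratr g).[biquad s r u v w t] = s /\
  (map_poly ratr h).[biquad s r u v w t] = r.
Proof.
move=> s2 r2; split.
- rewrite -[RHS](biquad_sqrts s r).1; apply: horner_biquad_conj => //.
  by rewrite -xE -gx (biquad_sqrts _ _).1.
- rewrite -[RHS](biquad_sqrts s r).2; apply: horner_biquad_conj => //.
  by rewrite -xE -hx (biquad_sqrts _ _).2.
Qed.

Lemma eq_biquad_conj (s r s' r' : algC) :
  s ^+ 2 = A%:R -> r ^+ 2 = B%:R -> s' ^+ 2 = A%:R -> r' ^+ 2 = B%:R ->
  (biquad s r u v w t == biquad s' r' u v w t) = (s == s') && (r == r').
Proof.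
move=> s2 r2 s'2 r'2; apply/eqP/andP => [xsr | [/eqP-> /eqP->] //].
have [gs hr] := horner_biquad_sqrts s2 r2; have [gs' hr'] := horner_biquad_sqrts s'2 r'2.
by split; [rewrite -gs xsr gs' | rewrite -hr xsr hr'].
Qed.

Lemma uniq_biquad_conjugates :
  uniq [:: biquad sA sB u v w t; biquad sA (- sB) u v w t;
           biquad (- sA) sB u v w t; biquad (- sA) (- sB) u v w t].
Proof.
have sA_neqN := rat_nonsquare_sqrt_neqN nsqA sA2.
have sB_neqN := rat_nonsquare_sqrt_neqN nsqB sB2.
rewrite /= !inE !eq_biquad_conj ?sqrrN // !eqxx (negbTE sA_neqN) (negbTE sB_neqN).
by rewrite eq_sym (negbTE sB_neqN).
Qed.

Lemma all_root_biquad_conjugates :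
  all (root (minCpoly x)) [:: biquad sA sB u v w t; biquad sA (- sB) u v w t;
                             biquad (- sA) sB u v w t; biquad (- sA) (- sB) u v w t].
Proof. by rewrite /= !root_minCpoly_biquad ?sqrrN. Qed.

Lemma biquad_conj_Aint : x \in Aint -> forall s r : algC,
  s ^+ 2 = A%:R -> r ^+ 2 = B%:R -> biquad s r u v w t \in Aint.
Proof.
by move=> xA s r s2 r2; apply: root_monic_Aint (root_minCpoly_biquad s2 r2) (minCpoly_monic x) xA.
Qed.

End Conjugates.

End Biquadratic.

Lemma max1_norm_ge1 (z : algC) : 1 <= Num.max 1 `|z|.
Proof. by rewrite comparable_le_max ?lexx ?real_comparable ?normr_real. Qed.

Lemma max1_norm_ge0 (z : algC) : 0 <= Num.max 1 `|z|.
Proof. exact: le_trans ler01 (max1_norm_ge1 z). Qed.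

Lemma norm_le_max1_norm (z : algC) : `|z| <= Num.max 1 `|z|.
Proof. by rewrite comparable_le_max ?lexx ?orbT ?real_comparable ?normr_real. Qed.

Lemma prod_max1_norm_ge1 (s : seq algC) : 1 <= \prod_(z <- s) Num.max 1 `|z|.
Proof.
by elim: s => [|z s IHs]; rewrite ?big_nil ?big_cons // mulr_ege1 // max1_norm_ge1.
Qed.

Lemma prod_max1_norm_subset (s rs : seq algC) : uniq s -> {subset s <= rs} ->
  \prod_(z <- s) Num.max 1 `|z| <= \prod_(z <- rs) Num.max 1 `|z|.
Proof.
elim: s rs => [|y s IHs] rs; first by rewrite big_nil => _ _; apply: prod_max1_norm_ge1.
move=> /= /andP [ys us] srs.
have yrs : y \in rs by apply: srs; rewrite mem_head.
rewrite big_cons (perm_big _ (perm_to_rem yrs)) big_cons /=.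
apply: ler_pM => //; first exact: max1_norm_ge0.
  exact: le_trans ler01 (prod_max1_norm_ge1 _).
apply: IHs => // z zs; apply: rem_mem; first by apply: contraNneq ys => <-.
by apply: srs; rewrite inE zs orbT.
Qed.

Lemma prod_roots_le_mahler (f : {poly algC}) (s : seq algC) :
  1 <= `|lead_coef f| -> uniq s -> all (root f) s ->
  \prod_(z <- s) Num.max 1 `|z| <= mahler f.
Proof.
move=> lc_ge1 us sroots; rewrite /mahler; case: closed_field_poly_normal => rs /= fE.
apply: le_trans (ler_peMl (le_trans ler01 (prod_max1_norm_ge1 _)) lc_ge1).
have lc_neq0 : lead_coef f != 0 by apply: contraTneq lc_ge1 => ->; rewrite normr0 ler10.
apply: prod_max1_norm_subset us _ => z /(allP sroots).
by rewrite {1}fE rootZ // root_prod_XsubC.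
Qed.

Lemma mahler_alg_ge_prod_roots (x M : algC) (s : seq algC) :
  mahler_alg x M -> uniq s -> all (root (minCpoly x)) s ->
  \prod_(z <- s) Num.max 1 `|z| <= M.
Proof.
move=> [p [[_ [c [c_neq0 pE]]] ->]] us sroots.
have lcE : lead_coef (map_poly intr p) = c.
  by rewrite pE lead_coefZ (monicP (minCpoly_monic x)) mulr1.
apply: prod_roots_le_mahler us _.
  rewrite lcE norm_intr_ge1 // -lcE lead_coefE coef_map /=.
  exact: intr_int.
by apply/allP => z /(allP sroots); rewrite pE rootZ.
Qed.

Lemma normB_le_max1_norm (a b : algC) :
  `|a - b| <= 2 * (Num.max 1 `|a| * Num.max 1 `|b|).
Proof.
apply: le_trans (ler_normB a b) _; rewrite mulr_natl mulr2n lerD //.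
  exact: le_trans (norm_le_max1_norm a) (ler_peMr (max1_norm_ge0 a) (max1_norm_ge1 b)).
exact: le_trans (norm_le_max1_norm b) (ler_peMl (max1_norm_ge0 b) (max1_norm_ge1 a)).
Qed.

Lemma norm_diff_prod_le_mahler (x M a b c d : algC) :
  mahler_alg x M -> uniq [:: a; b; c; d] ->
  all (root (minCpoly x)) [:: a; b; c; d] ->
  `|(a - b) * (c - d)| <= 4 * M.
Proof.
move=> xM uabcd roots; have := mahler_alg_ge_prod_roots xM uabcd roots.
rewrite !big_cons big_nil mulr1 => prodM.
rewrite normrM; apply: le_trans (ler_pM _ _ (normB_le_max1_norm a b) (normB_le_max1_norm c d)) _.
- exact: normr_ge0.
- exact: normr_ge0.
by rewrite mulrACA -natrM -!mulrA ler_pM2l ?ltr0n.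
Qed.

Lemma Aint_mul_sqrt_int (k : nat) (s : algC) (q : rat) :
  squarefree k -> s ^+ 2 = k%:R -> ratr q * s \in Aint -> q \is a Num.int.
Proof.
move=> sqk s2 qsA; apply: (squarefree_int_of_sqr sqk).
rewrite -Cint_rat rmorphM rmorphXn rmorph_nat /= -s2 -exprMn.
apply: Cint_rat_Aint; last exact: rpredX.
by rewrite exprMn s2 rpredM ?rpredX ?Crat_rat ?rpred_nat.
Qed.

Section ConjugateDifferences.

Variables (l m n : nat) (sA sB : algC) (u v w t : rat).
Hypotheses (l_gt0 : (0 < l)%N) (nsq_ml : rat_nonsquare (m * l)).
Hypotheses (sq_nl : squarefree (n * l)) (sq_mn : squarefree (m * n)).
Hypotheses (sA2 : sA ^+ 2 = (m * l)%:R) (sB2 : sB ^+ 2 = (n * l)%:R).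
Hypothesis conj_Aint : forall s r : algC,
  s ^+ 2 = (m * l)%:R -> r ^+ 2 = (n * l)%:R -> biquad s r u v w t \in Aint.
Hypothesis conj_neq : biquad sA sB u v w t != biquad sA (- sB) u v w t.

Local Notation x_ s r := (biquad s r u v w t).
Local Notation d1 := (x_ sA sB - x_ sA (- sB)).
Local Notation d2 := (x_ (- sA) sB - x_ (- sA) (- sB)).

Let l_neq0 : l%:R != 0 :> algC. Proof. by rewrite pnatr_eq0 -lt0n. Qed.

Lemma sqrt_mn_sqr : (sA * sB / l%:R) ^+ 2 = (m * n)%:R.
Proof.
by rewrite expr_div_n exprMn sA2 sB2 -natrM mulnACA !natrM -expr2 mulfK ?sqrf_eq0.
Qed.

Lemma conj_diffD : d1 + d2 = ratr (4 * w) * sB.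
Proof. by rewrite /biquad rmorphM rmorph_nat; ring. Qed.

Lemma conj_diffB : d1 - d2 = ratr (4 * t * l%:R) * (sA * sB / l%:R).
Proof. by rewrite /biquad !rmorphM !rmorph_nat /=; field; exact: l_neq0. Qed.

Lemma conj_coords_int : 4 * w \is a Num.int /\ 4 * t * l%:R \is a Num.int.
Proof.
have conjsA s r : s \in [:: sA; - sA] -> r \in [:: sB; - sB] -> x_ s r \in Aint.
  by rewrite !inE => /orP [] /eqP-> /orP [] /eqP->; apply: conj_Aint; rewrite ?sqrrN.
split.
  apply: (Aint_mul_sqrt_int sq_nl sB2).
  by rewrite -conj_diffD rpredD ?rpredB ?conjsA // !inE eqxx ?orbT.
apply: (Aint_mul_sqrt_int sq_mn sqrt_mn_sqr).
by rewrite -conj_diffB !rpredB ?conjsA // !inE eqxx ?orbT.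
Qed.

Lemma conj_coords_neq : l%:R * (4 * w) ^+ 2 != m%:R * (4 * t * l%:R) ^+ 2.
Proof.
move: (4 * w) (4 * t * l%:R) conj_diffD conj_diffB => W T sumE diffE.
apply: contra conj_neq => /eqP lWmT.
have [T0 | T_neq0] := eqVneq T 0.
  have W0 : W = 0.
    apply/eqP; move: lWmT; rewrite T0 expr0n mulr0 => /eqP.
    by rewrite mulf_eq0 pnatr_eq0 eqn0Ngt l_gt0 sqrf_eq0.
  have d1E : d1 = ((d1 + d2) + (d1 - d2)) / 2 by field.
  by rewrite -subr_eq0 d1E sumE diffE W0 T0 rmorph0 !mul0r addr0 mul0r.
case/negP: (nsq_ml (l%:R * W / T)); apply/eqP.
have -> : (l%:R * W / T) ^+ 2 = l%:R * (l%:R * W ^+ 2) / T ^+ 2.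
  by rewrite expr_div_n exprMn mulrA -expr2.
by rewrite lWmT mulrA mulfK ?sqrf_eq0 // natrM mulrC.
Qed.

Lemma conj_diff_prod_ge : n%:R <= 4 * `|d1 * d2|.
Proof.
have [W_int T_int] := conj_coords_int.
have := conj_coords_neq; rewrite -subr_eq0.
move: (4 * w) (4 * t * l%:R) W_int T_int conj_diffD conj_diffB.
move=> W T W_int T_int sumE diffE z_neq0.
have prodE : 4 * (d1 * d2) = ratr (n%:R * (l%:R * W ^+ 2 - m%:R * T ^+ 2)).
  have -> : 4 * (d1 * d2) = (d1 + d2) ^+ 2 - (d1 - d2) ^+ 2 by ring.
  rewrite sumE diffE [(_ * sB) ^+ 2]exprMn [(_ * (_ / _)) ^+ 2]exprMn sB2 sqrt_mn_sqr.
  by rewrite !(rmorphM, rmorphB, rmorphXn, rmorph_nat) /=; ring.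
rewrite -[4](normr_nat algC) -normrM prodE rmorphM rmorph_nat normrM normr_nat.
rewrite ler_peMr ?ler0n // norm_intr_ge1 ?fmorph_eq0 // Cint_rat.
by rewrite rpredB ?rpredM ?rpredX ?rpred_nat.
Qed.

End ConjugateDifferences.

Theorem proposition3p1 (l m n : nat) :
  (0 < l)%N -> (l < m)%N -> (m < n)%N ->
  coprime l m -> coprime l n -> coprime m n ->
  squarefree l -> squarefree m -> squarefree n ->
  forall (x : algC) (Mx : algC),
    x \in Aint -> generates_biquad (m * l) (n * l) x ->
    mahler_alg x Mx ->
    n%:R / 48%:R <= Mx.
Proof.
move=> l_gt0 lm mn clm cln cmn sql sqm sqn x M xA.
move=> [[u [v [w [t xE]]]] [[g gx] [h hx]]] xM.
have sA2 : sqrtC (m * l)%:R ^+ 2 = (m * l)%:R :> algC by rewrite sqrtCK.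
have sB2 : sqrtC (n * l)%:R ^+ 2 = (n * l)%:R :> algC by rewrite sqrtCK.
have sq_ml : squarefree (m * l) by apply: squarefree_mul; rewrite // coprime_sym.
have sq_nl : squarefree (n * l) by apply: squarefree_mul; rewrite // coprime_sym.
have sq_mn : squarefree (m * n) := squarefree_mul cmn sqm sqn.
have nsq_ml : rat_nonsquare (m * l) by apply: squarefree_rat_nonsquare => //; nia.
have nsq_nl : rat_nonsquare (n * l) by apply: squarefree_rat_nonsquare => //; nia.
have nsq_mlnl : rat_nonsquare (m * l * (n * l)).
  by rewrite mulnACA; apply/rat_nonsquare_mul_sqr/squarefree_rat_nonsquare => //; nia.
have uniq_conj := uniq_biquad_conjugates nsq_ml nsq_nl nsq_mlnl sA2 sB2 xE gx hx.
have conj_neq : biquad (sqrtC (m * l)%:R) (sqrtC (n * l)%:R) u v w t !=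
                biquad (sqrtC (m * l)%:R) (- sqrtC (n * l)%:R) u v w t.
  by move: uniq_conj; rewrite /= !inE => /andP [/norP []].
have n_le := conj_diff_prod_ge l_gt0 nsq_ml sq_nl sq_mn sA2 sB2
  (biquad_conj_Aint nsq_ml nsq_nl nsq_mlnl sA2 sB2 xE xA) conj_neq.
have diff_le := norm_diff_prod_le_mahler xM uniq_conj
  (all_root_biquad_conjugates nsq_ml nsq_nl nsq_mlnl sA2 sB2 xE).
have M_ge0 : 0 <= M by rewrite -(pmulr_rge0 _ (ltr0n _ 4)) (le_trans _ diff_le).
rewrite ler_pdivrMr ?ltr0n // (le_trans n_le) //.
apply: le_trans (ler_wpM2l (ler0n _ 4) diff_le) _.
by rewrite mulrA mulrC; apply: (ler_wpM2l M_ge0); rewrite -natrM ler_nat.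
Qed.
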